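(* Let $R>0$ and let $s: I\to\mathbb{R}^n$ be an arc-length parametrized curve defined on an open interval $I\subseteq\mathbb{R}$. Suppose $s$ is continuous and $R$-monotone, i.e. for every closed ball $B\subseteq\mathbb{R}^n$ of radius at most $R$, the inverse image $s^{-1}(B)$ is a connected subset of $I$. Then $s$ is differentiable at almost every point of $I$.
   Context: A closed ball is a set $\{x\in\mathbb{R}^n:\|x-a\|\le \rho\}$ with center $a$ and radius $\rho$. For $R>0$, an arc-length parametrized curve $s$ is called $R$-monotone if the inverse image under $s$ of every closed ball of radius at most $R$ is connected. *)

(* R : realType, R^n represented as 'rV[R]_n
   with the EUCLIDEAN norm defined below (the library norm on 'rV is sup-norm). *)
From HB Require Import structures.
From mathcomp Require Import all_boot all_order all_algebra.
From mathcomp Require Import all_classical all_reals all_analysis.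
Set Implicit Arguments. Unset Strict Implicit. Unset Printing Implicit Defensive.
Import Order.TTheory GRing.Theory Num.Theory.
Import numFieldNormedType.Exports.
Local Open Scope classical_set_scope.
Local Open Scope ring_scope.

Definition enorm (R : realType) (n : nat) (v : 'rV[R]_n) : R :=
  Num.sqrt (\sum_(i < n) v ord0 i ^+ 2).

Definition cball (R : realType) (n : nat) (a : 'rV[R]_n) (rho : R) : set 'rV[R]_n :=
  [set x | enorm (x - a) <= rho].

Definition polyline_length (R : realType) (n : nat) (s : R -> 'rV[R]_n)
  (t : seq R) : R :=
  \sum_(i < (size t).-1) enorm (s (nth 0 t i.+1) - s (nth 0 t i)).

Definition curve_length (R : realType) (n : nat) (s : R -> 'rV[R]_n) (a b : R)
  : \bar R :=
  ereal_sup [set (polyline_length s t)%:E | t in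
    [set t : seq R | sorted <=%R t /\ all (fun x => (a <= x) && (x <= b)) t]].

Definition arclength_param (R : realType) (n : nat) (I : set R)
  (s : R -> 'rV[R]_n) : Prop :=
  forall a b, I a -> I b -> a <= b -> curve_length s a b = (b - a)%:E.

Definition R_monotone (R : realType) (n : nat) (Rad : R) (I : set R)
  (s : R -> 'rV[R]_n) : Prop :=
  forall (a : 'rV[R]_n) (rho : R), 0 < rho -> rho <= Rad ->
    connected (I `&` s @^-1` cball a rho).

From HB Require Import structures.
From mathcomp Require Import all_boot all_order all_algebra.
From mathcomp Require Import all_classical all_reals all_analysis.
From mathcomp Require Import lra.

(* Arc-length parametrization makes every coordinate of s 1-Lipschitz on I,
   since a chord is no longer than the arc it subtends.  A k-Lipschitz
   f : R -> R is g - k id with g := f + k id nondecreasing and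
   (2k+1)-Lipschitz, so the Lebesgue-Stieltjes measure of g is absolutely
   continuous with respect to Lebesgue measure.  By Radon-Nikodym, g is then
   an indefinite integral on every bounded interval, hence differentiable
   almost everywhere by the Lebesgue differentiation theorem.
   Differentiability of s is coordinatewise, and the open set I is covered by
   countably many compact intervals, on which clamping the parameter extends
   s to a Lipschitz curve on the whole line. *)

Set Implicit Arguments.
Unset Strict Implicit.
Unset Printing Implicit Defensive.
Import Order.TTheory GRing.Theory Num.Theory.
Import numFieldNormedType.Exports.
Local Open Scope classical_set_scope.
Local Open Scope ring_scope.

Lemma negligible_bigcup_fin d (T : ringOfSetsType d) (R : realFieldType)
    (mu : {measure set T -> \bar R}) (I : finType) (F : I -> set T) :
  (forall i, mu.-negligible (F i)) -> mu.-negligible (\bigcup_i F i).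
Proof.
move=> NF; have -> : \bigcup_i F i = \big[setU/set0]_(i in predT) F i.
  by rewrite -bigcup_pred; apply: eq_bigcupl; split.
by elim/big_ind: _ => //; [exact: negligible_set0|exact: negligibleU].
Qed.

Section grid.
Context {R : realType}.

(* A countable family of open intervals containing arbitrarily small
   neighbourhoods of every real number. *)
Definition grid_lo (k j : nat) : R := (j%:R - 1) / k.+1%:R - k%:R.
Definition grid_hi (k j : nat) : R := (j%:R + 1) / k.+1%:R - k%:R.

Lemma grid_lo_le_hi k j : grid_lo k j <= grid_hi k j.
Proof. by rewrite lerD2r ler_pM2r ?invr_gt0 ?ltr0n// lerD2l; lra. Qed.

Lemma grid_itv_around (t r : R) : 0 < r -> exists k j : nat,
  [/\ t - r < grid_lo k j, grid_lo k j < t,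
      t < grid_hi k j & grid_hi k j < t + r].
Proof.
move=> r0; have r2 : 0 < 2 / r by rewrite divr_gt0.
have [k k_gt] : exists k : nat, `|t| + 2 / r < k%:R.
  exists (Num.truncn (`|t| + 2 / r)).+1.
  by have /andP[_ ->] := truncn_itv (addr_ge0 (normr_ge0 t) (ltW r2)).
have m0 : 0 < k.+1%:R :> R by rewrite ltr0n.
have [j jle ltj] : exists2 j : nat,
    j%:R <= (t + k%:R) * k.+1%:R & (t + k%:R) * k.+1%:R < j%:R + 1.
  have tk0 : 0 <= (t + k%:R) * k.+1%:R.
    by rewrite mulr_ge0 ?ler0n//; have := ler_norm (- t); rewrite normrN; lra.
  have /andP[? ?] := truncn_itv tk0.
  by exists (Num.truncn ((t + k%:R) * k.+1%:R)); rewrite ?natr1.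
exists k, j.
have hi_gt : t < grid_hi k j by rewrite /grid_hi ltrBrDr ltr_pdivlMr.
have p_le : j%:R / k.+1%:R - k%:R <= t by rewrite lerBlDr ler_pdivrMr.
move: hi_gt p_le.
rewrite /grid_lo /grid_hi mulrBl mulrDl mul1r !(addrAC _ _ (- k%:R)).
set w := k.+1%:R^-1; set p := j%:R / k.+1%:R - k%:R => p_gt p_le.
have w0 : 0 < w by rewrite invr_gt0.
have w2 : 2 * w < r.
  have kr : 2 < k%:R * r by rewrite -ltr_pdivrMr//; have := normr_ge0 t; lra.
  by rewrite /w ltr_pdivrMr// -[k.+1%:R]natr1 mulrDr mulr1 [r * _]mulrC; lra.
by split; lra.
Qed.
End grid.

Section negligible_open.
Context {R : realType}.
Local Notation mu := (@lebesgue_measure R).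

Lemma negligibleI_open (D N : set R) : open D ->
  (forall a b, a <= b -> `[a, b] `<=` D -> mu.-negligible (`]a, b[ `&` N)) ->
  mu.-negligible (D `&` N).
Proof.
move=> oD N_itv.
pose S k j := [set x |
  `[grid_lo k j, grid_hi k j] `<=` D /\ (`]grid_lo k j, grid_hi k j[ `&` N) x].
have S_negligible : mu.-negligible (\bigcup_k \bigcup_j S k j).
  apply: negligible_bigcup => k; apply: negligible_bigcup => j.
  have [sub|nsub] := pselect (`[grid_lo k j, grid_hi k j] `<=` D); last first.
    by apply: negligibleS (negligible_set0 _) => x [/nsub].
  by apply: negligibleS (N_itv _ _ (grid_lo_le_hi k j) sub) => x [].
apply: negligibleS S_negligible => t [Dt Nt].
have /nbhs_ballP[r r0 rD] := oD t Dt.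
have [k [j [lo_gt lo_lt hi_gt hi_lt]]] := @grid_itv_around R t r r0.
exists k => //; exists j => //; split.
  move=> x /=; rewrite in_itv /= => /andP[? ?]; apply: rD.
  by rewrite /ball /= ltr_distlC; apply/andP; split; lra.
by split => //; rewrite /= in_itv /= lo_lt hi_gt.
Qed.
End negligible_open.

Section lipschitz_cumulative.
Context {R : realType}.
Local Notation mu := (@lebesgue_measure R).
Local Open Scope ereal_scope.

Lemma lebesgue_stieltjes_measure_itvoc (g : cumulative R R) (a b : R) :
  (a <= b)%R -> lebesgue_stieltjes_measure g `]a, b]%classic = (g b - g a)%:E.
Proof.
move=> ab; rewrite /lebesgue_stieltjes_measure /measure_extension.
rewrite measurable_mu_extE; last exact: is_ocitv.
exact: wlength_itv_bnd.
Qed.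

Variables (g : cumulative R R) (c : R).
Hypothesis c_gt0 : (0 < c)%R.
Hypothesis g_lip : forall x y, (x <= y)%R -> (g y - g x <= c * (y - x))%R.

Lemma lebesgue_stieltjes_le_lebesgue A :
  lebesgue_stieltjes_measure g A <= c%:E * mu A.
Proof.
rewrite /lebesgue_measure /lebesgue_stieltjes_measure /measure_extension.
rewrite /mu_ext -ereal_inf_pZl//.
apply: le_ereal_inf_tmp => _ [_ [B [mB AB] <-] <-].
apply: le_trans (ereal_inf_lbound _) _; first by exists B.
rewrite -nneseriesZl; last by move=> i _; exact: wlength_ge0.
apply: lee_nneseries => [*|i _]; first exact: wlength_ge0.
have /ocitvP[->|[[x y] /= xy ->]] := mB i.
  by have := wlength0 g; have := wlength0 idfun => /= -> ->; rewrite mule0.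
have lexy := ltW xy.
by rewrite !wlength_itv_bnd// -EFinM lee_fin g_lip.
Qed.

Lemma lebesgue_stieltjes_density (a b : R) : (a <= b)%R ->
  exists2 f : R -> R, mu.-integrable setT (EFin \o f) &
    forall y, (a <= y <= b)%R ->
      (\int[mu]_(t in `]a, y]) f t)%R = (g y - g a)%R.
Proof.
move=> ab.
have mab : measurable (`]a, b]%classic : set (measurableTypeR R)).
  exact: measurable_itv.
have fin_ab : lebesgue_stieltjes_measure g `]a, b] < +oo.
  by rewrite lebesgue_stieltjes_measure_itvoc ?ltry.
(* Radon-Nikodym needs a finite measure, hence the restriction to ]a, b]. *)
pose nu := mfrestr mab fin_ab.
have nu_ac : nu `<< mu.
  apply/null_content_dominatesP => A mA A0; apply/eqP.
  rewrite eq_le measure_ge0 andbT.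
  apply: le_trans (lebesgue_stieltjes_le_lebesgue _) _.
  suff -> : mu (A `&` `]a, b]) = 0 by rewrite mule0.
  apply/eqP; rewrite eq_le measure_ge0 andbT -A0.
  by apply: le_measure; rewrite ?inE//; exact: measurableI.
have [h [_ h_fin h_int h_nu]] := radon_nikodym_sigma_finite nu_ac.
have hE : EFin \o (fine \o h) = h by apply/funext => t /=; rewrite fineK.
exists (fine \o h); first by rewrite hE.
move=> y /andP[ay yb]; rewrite /Rintegral.
under eq_integral => t _ do
  rewrite -[(fine (h t))%:E]/((EFin \o (fine \o h)) t) hE.
rewrite -h_nu; last exact: measurable_itv.
change (fine (lebesgue_stieltjes_measure g (`]a, y] `&` `]a, b]))
  = g y - g a)%R.
rewrite setIidl ?lebesgue_stieltjes_measure_itvoc//.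
by apply: subset_itvl; rewrite bnd_simp.
Qed.

Lemma lipschitz_cumulative_derivable_itv (a b : R) : (a <= b)%R ->
  mu.-negligible (`]a, b[ `&` [set x | ~ derivable g x 1]).
Proof.
move=> ab; have [f f_int f_g] := lebesgue_stieltjes_density ab.
have f_int_itv y :
    mu.-integrable [set` Interval (BRight a) (BRight y)] (EFin \o f).
  by apply: integrableS f_int => //; exact: measurable_itv.
apply: negligibleS (FTC1 f_int_itv (open_integrable_locally openT f_int)).
move=> x [/= + ndg]; rewrite in_itv /= => /andP[ax xb] /(_ _)[].
  by rewrite lte_fin.
move=> dF _; apply: ndg.
apply: near_eq_derivable (derivableD dF (derivable_cst (g a) _ _)).
near=> y; have : y \in `]a, b[.
  by near: y; apply: near_in_itvoo; rewrite in_itv /= ax.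
rewrite in_itv /= => /andP[ay yb] /=.
by rewrite fctE f_g ?subrK// (ltW ay) (ltW yb).
Unshelve. all: by end_near. Qed.

Lemma lipschitz_cumulative_derivable_ae :
  mu.-negligible [set x | ~ derivable g x 1].
Proof.
rewrite -[X in _.-negligible X]setTI.
apply: negligibleI_open openT _ => a b ab _.
exact: lipschitz_cumulative_derivable_itv.
Qed.
End lipschitz_cumulative.

Section lipschitz.
Context {R : realType}.
Variables (f : R -> R) (k : R).
Hypothesis f_lip : k.-lipschitz f.

Let f_lipP x y : `|f x - f y| <= k * `|x - y|.
Proof. exact: (@f_lip (x, y)). Qed.

Lemma lipschitz_ge0 : 0 <= k.
Proof.
by have := f_lipP 1 0; rewrite subr0 normr1 mulr1; apply: le_trans.
Qed.

Lemma lipschitz_continuous : continuous f.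
Proof.
move=> x; apply/cvgrPdist_lt => e e0.
have k1 : 0 < k + 1 by have := lipschitz_ge0; lra.
near=> y; apply: le_lt_trans (f_lipP x y) _.
apply: (@le_lt_trans _ _ ((k + 1) * `|x - y|)).
  by rewrite ler_wpM2r ?lerDl.
rewrite mulrC -ltr_pdivlMr//; near: y.
exact: (@cvgr_dist_lt _ _ _ _ _ id x cvg_id) (divr_gt0 e0 k1).
Unshelve. all: by end_near. Qed.

Definition lipschitz_nondecreasing_part x := f x + k * x.
Local Notation g := lipschitz_nondecreasing_part.

Lemma lipschitz_nondecreasing_part_nondecreasing : nondecreasing g.
Proof.
move=> x y xy; rewrite -subr_ge0 /g.
have := f_lipP y x; rewrite (ger0_norm (x := y - x)) ?subr_ge0// ler_norml.
by case/andP=> + _; rewrite mulrBr; lra.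
Qed.

Lemma lipschitz_nondecreasing_part_right_continuous : right_continuous g.
Proof.
apply: right_continuousW => x.
by apply: cvgD; [exact: lipschitz_continuous|exact: mulrl_continuous].
Qed.

HB.instance Definition _ := isCumulative.Build R _ R g
  lipschitz_nondecreasing_part_nondecreasing
  lipschitz_nondecreasing_part_right_continuous.

Lemma lipschitz_nondecreasing_partB_le x y :
  x <= y -> g y - g x <= (k + k + 1) * (y - x).
Proof.
move=> xy; have := f_lipP y x.
rewrite (ger0_norm (x := y - x)) ?subr_ge0// ler_norml.
by case/andP=> _; rewrite /g; have := lipschitz_ge0; nra.
Qed.

Lemma lipschitz_derivable_ae :
  (@lebesgue_measure R).-negligible [set x | ~ derivable f x 1].
Proof.
have k_gt0 : 0 < k + k + 1 by have := lipschitz_ge0; lra.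
have := lipschitz_cumulative_derivable_ae k_gt0
  lipschitz_nondecreasing_partB_le.
apply: negligibleS => x ndf dg; apply: ndf.
have -> : f = g \- (fun x => k * x) by apply/funext => y; rewrite /= /g addrK.
by apply: derivableB => //; apply: derivableM => //; exact: derivable_id.
Qed.
End lipschitz.

Section clamp.
Context {R : realType}.

Definition clamp (a b t : R) := Num.min b (Num.max a t).

Lemma clamp_lipschitz a b : 1.-lipschitz (clamp a b).
Proof.
have norm_bounds (u v : R) : u - v <= `|u - v| /\ v - u <= `|u - v|.
  by split; [|rewrite distrC]; exact: ler_norm.
have max_lip (u v : R) : `|Num.max a u - Num.max a v| <= `|u - v|.
  have [? ?] := norm_bounds u v; rewrite !maxEle ler_norml.
  by case: (leP a u) => ?; case: (leP a v) => ?; apply/andP; split; lra.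
have min_lip (u v : R) : `|Num.min b u - Num.min b v| <= `|u - v|.
  have [? ?] := norm_bounds u v; rewrite !minEle ler_norml.
  by case: (leP b u) => ?; case: (leP b v) => ?; apply/andP; split; lra.
by move=> [x y] _ /=; rewrite mul1r (le_trans (min_lip _ _)).
Qed.

Lemma clamp_itv a b t : a <= b -> a <= clamp a b t <= b.
Proof. by move=> ab; rewrite /clamp ge_min le_min ab le_max !lexx. Qed.

Lemma clamp_id a b t : a <= t <= b -> clamp a b t = t.
Proof. by case/andP=> ta tb; rewrite /clamp max_r// min_r. Qed.

End clamp.

Section arclength.
Context {R : realType} {n : nat}.
Implicit Types (I : set R) (s : R -> 'rV[R]_n).

Lemma coord_le_enorm (v : 'rV[R]_n) (i : 'I_n) : `|v ord0 i| <= enorm v.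
Proof.
rewrite /enorm -sqrtr_sqr ler_wsqrtr// (bigD1 i)//= lerDl.
by apply: sumr_ge0 => j _; exact: sqr_ge0.
Qed.

Lemma arclength_enormB_le I s a b : arclength_param I s ->
  I a -> I b -> a <= b -> enorm (s b - s a) <= b - a.
Proof.
move=> arc Ia Ib ab; rewrite -lee_fin -(arc a b Ia Ib ab).
have -> : enorm (s b - s a) = polyline_length s [:: a; b].
  by rewrite /polyline_length big_ord1.
apply: ereal_sup_ubound; exists [:: a; b] => //.
by split; rewrite /= ?ab ?lexx ?andbT.
Qed.

Lemma arclength_coord_lipschitz I s (i : 'I_n) : arclength_param I s ->
  1.-lipschitz_I (fun t => s t ord0 i).
Proof.
move=> arc [x y] /= [Ix Iy]; rewrite mul1r.
wlog xy : x y Ix Iy / x <= y.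
  move=> W; have [|/ltW yx] := leP x y; first exact: W.
  by rewrite distrC [X in _ <= X]distrC; exact: W.
rewrite distrC [X in _ <= X]distrC (ger0_norm (x := y - x)) ?subr_ge0//.
apply: le_trans (arclength_enormB_le arc Ix Iy xy).
by have := coord_le_enorm (s y - s x) i; rewrite !mxE.
Qed.

Lemma arclength_differentiable_itv I s a b : arclength_param I s ->
  a <= b -> `[a, b] `<=` I ->
  (@lebesgue_measure R).-negligible
    (`]a, b[ `&` [set t | ~ differentiable s t]).
Proof.
move=> arc ab abI.
pose u (i : 'I_n) t := s (clamp a b t) ord0 i.
have u_lip i : 1.-lipschitz (u i).
  move=> [x y] _ /=; rewrite mul1r.
  apply: le_trans (_ : _ <= `|clamp a b x - clamp a b y|) _.
    have cI : I (clamp a b x) /\ I (clamp a b y).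
      by split; apply: abI; rewrite /= in_itv /= clamp_itv.
    rewrite -[leRHS]mul1r.
    exact: (@arclength_coord_lipschitz I s i arc (clamp a b x, clamp a b y) cI).
  by rewrite -[leRHS]mul1r; apply: (@clamp_lipschitz R a b (x, y)).
apply: negligibleS
  (negligible_bigcup_fin (fun i => lipschitz_derivable_ae (u_lip i))).
move=> t [/= + nds]; rewrite in_itv /= => /andP[ta tb].
apply: contrapT => u_der; apply: nds; apply/derivable1_diffP/derivable_mxP.
move=> i0 i; rewrite ord1.
have : derivable (u i) t 1 by apply: contrapT => ?; apply: u_der; exists i.
move/near_eq_derivable; apply; near=> x.
have : x \in `]a, b[ by near: x; apply: near_in_itvoo; rewrite in_itv /= ta tb.
by rewrite in_itv /= => /andP[ax xb]; rewrite /u clamp_id// !ltW.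
Unshelve. all: by end_near. Qed.
End arclength.

Theorem mainTheorem1 (R : realType) (n : nat) (Rad : R) (I : set R)
  (s : R -> 'rV[R]_n) :
  0 < Rad ->
  open I -> is_interval I ->
  arclength_param I s ->
  (forall t, I t -> {for t, continuous s}) ->
  R_monotone Rad I s ->
  (@lebesgue_measure R).-negligible [set t | I t /\ ~ differentiable s t].
Proof.
move=> _ oI _ arc _ _; apply: negligibleI_open oI _ => a b ab abI.
exact: arclength_differentiable_itv arc ab abI.
Qed.
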